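(* There is an absolute constant $K$ such that for all $0<p<q<1/2$, \[ \left|\frac{H_p(q)}{p\,h\!\left(\frac qp-1\right)}-1\right|\le K\,(p+q). \]
   Context: $H_p(q)=q\log\frac qp+(1-q)\log\frac{1-q}{1-p}$ is the Kullback–Leibler divergence between $\mathrm{Bern}(q)$ and $\mathrm{Bern}(p)$, and $h(x)=(x+1)\log(x+1)-x$. The paper states the bound as $O(p+q)$ with $p,q$ possibly depending on $n$. *)

From Stdlib Require Import Reals.
Open Scope R_scope.

(* KL divergence between Bern(q) and Bern(p). *)
Definition Hkl (p q : R) : R :=
  q * ln (q / p) + (1 - q) * ln ((1 - q) / (1 - p)).

Definition hfun (x : R) : R := (x + 1) * ln (x + 1) - x.

(* Put r = q/p and z = (1-q)/(1-p).  Then p h(q/p - 1) = q ln r - (q - p), and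
   the difference H_p(q) - p h(q/p - 1) = (1-q) ln z + (q - p) is squeezed by
   1 - 1/z <= ln z <= z - 1 into [0, (q-p)^2/(1-p)].  The second-order bound
   ln r >= (1 - 1/r) + (1 - 1/r)^2/2 for r >= 1 gives p h(q/p - 1) >= (q-p)^2/(2q),
   so the relative error is at most 2q/(1-p) <= 4q. *)

From Stdlib Require Import Reals Lra.
From Coquelicot Require Import Coquelicot.
Open Scope R_scope.

Lemma ln_le_sub1 z : 0 < z -> ln z <= z - 1.
Proof.
  intros Hz. pose proof (exp_ineq1_le (ln z)) as Hexp.
  rewrite exp_ln in Hexp; lra.
Qed.

Lemma ln_ge_1_sub_inv z : 0 < z -> 1 - / z <= ln z.
Proof.
  intros Hz. pose proof (ln_le_sub1 (/ z) (Rinv_0_lt_compat _ Hz)) as Hinv.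
  rewrite ln_Rinv in Hinv; lra.
Qed.

(* The difference has derivative (x - 1)^2 / x^3 >= 0 and vanishes at 1. *)
Lemma ln_ge_1_sub_inv_add_sq r :
  1 <= r -> (1 - / r) + (1 - / r) ^ 2 / 2 <= ln r.
Proof.
  intros Hr. destruct (Req_dec r 1) as [->|Hne].
  { rewrite ln_1, Rinv_1. lra. }
  set (f := fun x => ln x - ((1 - / x) + (1 - / x) ^ 2 / 2)).
  destruct (MVT_cor2 f (fun x => (x - 1) ^ 2 / x ^ 3) 1 r) as [c [Hfc Hc]].
  - lra.
  - intros x Hx. apply is_derive_Reals. unfold f.
    auto_derive.
    + repeat split; lra.
    + field. lra.
  - assert (Hf1 : f 1 = 0) by (unfold f; rewrite ln_1, Rinv_1; lra).
    assert (0 <= (c - 1) ^ 2 / c ^ 3 * (r - 1)).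
    { apply Rmult_le_pos; [|lra]. apply Rmult_le_pos; [apply pow2_ge_0|].
      left; apply Rinv_0_lt_compat, pow_lt; lra. }
    unfold f in Hfc, Hf1. lra.
Qed.

Lemma p_hfun_eq p q : p <> 0 -> p * hfun (q / p - 1) = q * ln (q / p) - (q - p).
Proof.
  intros Hp. unfold hfun. replace (q / p - 1 + 1) with (q / p) by ring.
  field. exact Hp.
Qed.

Lemma p_hfun_ge p q :
  0 < p -> p <= q -> (q - p) ^ 2 / (2 * q) <= p * hfun (q / p - 1).
Proof.
  intros Hp Hpq. rewrite p_hfun_eq by lra.
  assert (Hr : 1 <= q / p).
  { apply (Rmult_le_reg_r p); [lra|]. field_simplify; lra. }
  pose proof (ln_ge_1_sub_inv_add_sq (q / p) Hr) as Hln.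
  replace (/ (q / p)) with (p / q) in Hln by (field; lra).
  assert (Htaylor : q * ((1 - p / q) + (1 - p / q) ^ 2 / 2)
                    = (q - p) + (q - p) ^ 2 / (2 * q)) by (field; lra).
  assert (q * ((1 - p / q) + (1 - p / q) ^ 2 / 2) <= q * ln (q / p))
    by (apply Rmult_le_compat_l; lra).
  lra.
Qed.

Lemma Hkl_sub_p_hfun p q : p <> 0 ->
  Hkl p q - p * hfun (q / p - 1) = (1 - q) * ln ((1 - q) / (1 - p)) + (q - p).
Proof. intros Hp. rewrite p_hfun_eq by exact Hp. unfold Hkl. ring. Qed.

Lemma Hkl_sub_p_hfun_ge0 p q :
  0 < p < 1 -> q < 1 -> 0 <= Hkl p q - p * hfun (q / p - 1).
Proof.
  intros Hp Hq. rewrite Hkl_sub_p_hfun by lra.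
  assert (Hln : 1 - / ((1 - q) / (1 - p)) <= ln ((1 - q) / (1 - p)))
    by (apply ln_ge_1_sub_inv, Rdiv_lt_0_compat; lra).
  assert ((1 - q) * (1 - / ((1 - q) / (1 - p))) <= (1 - q) * ln ((1 - q) / (1 - p)))
    by (apply Rmult_le_compat_l; lra).
  assert ((1 - q) * (1 - / ((1 - q) / (1 - p))) = p - q) by (field; lra).
  lra.
Qed.

Lemma Hkl_sub_p_hfun_le p q :
  0 < p < 1 -> q < 1 -> Hkl p q - p * hfun (q / p - 1) <= (q - p) ^ 2 / (1 - p).
Proof.
  intros Hp Hq. rewrite Hkl_sub_p_hfun by lra.
  assert (Hln : ln ((1 - q) / (1 - p)) <= (1 - q) / (1 - p) - 1)
    by (apply ln_le_sub1, Rdiv_lt_0_compat; lra).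
  assert ((1 - q) * ln ((1 - q) / (1 - p)) <= (1 - q) * ((1 - q) / (1 - p) - 1))
    by (apply Rmult_le_compat_l; lra).
  assert ((1 - q) * ((1 - q) / (1 - p) - 1) = (p - q) + (q - p) ^ 2 / (1 - p))
    by (field; lra).
  lra.
Qed.

Lemma Rabs_div_sub1_le a b e :
  0 < b -> 0 <= a - b -> a - b <= e * b -> Rabs (a / b - 1) <= e.
Proof.
  intros Hb Hlo Hhi.
  replace (a / b - 1) with ((a - b) / b) by (field; lra).
  rewrite Rabs_pos_eq by (apply Rdiv_le_0_compat; lra).
  apply (Rmult_le_reg_r b); [exact Hb|].
  unfold Rdiv. rewrite Rmult_assoc, Rinv_l, Rmult_1_r by lra.
  exact Hhi.
Qed.

Theorem lemma5 :
  exists K : R, forall p q : R,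
    0 < p -> p < q -> q < 1 / 2 ->
    Rabs (Hkl p q / (p * hfun (q / p - 1)) - 1) <= K * (p + q).
Proof.
  exists 4. intros p q Hp Hpq Hq.
  pose proof (p_hfun_ge p q Hp (Rlt_le _ _ Hpq)) as Hden.
  assert (Hsq : 0 < (q - p) ^ 2 / (2 * q))
    by (apply Rdiv_lt_0_compat; [apply pow_lt|]; lra).
  apply Rle_trans with (4 * q); [|lra].
  apply Rabs_div_sub1_le.
  - lra.
  - apply Hkl_sub_p_hfun_ge0; lra.
  - eapply Rle_trans; [apply Hkl_sub_p_hfun_le; lra|].
    assert (Hnum : (q - p) ^ 2 / (1 - p) <= 4 * q * ((q - p) ^ 2 / (2 * q))).
    { replace (4 * q * ((q - p) ^ 2 / (2 * q))) with (2 * (q - p) ^ 2) by (field; lra).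
      apply (Rmult_le_reg_r (1 - p)); [lra|].
      field_simplify; [|lra].
      pose proof (pow2_ge_0 (q - p)). nra. }
    assert (4 * q * ((q - p) ^ 2 / (2 * q)) <= 4 * q * (p * hfun (q / p - 1)))
      by (apply Rmult_le_compat_l; lra).
    lra.
Qed.
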